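(* Let $q=p^a$ with $p$ prime, $\mathcal V=\mathbb F_q$, and let $G=N.L\le{\rm A\Gamma L}(1,q)$, where $N=\{t_y:y\in\mathbb F_q\}$, $t_y:u\mapsto u+y$, is the group of translations and $L\le{\rm \Gamma L}(1,q)$ is transitive on $\mathcal V\setminus\{0\}$. Let $\gamma\subset\mathcal V$ with $|\gamma|=k$, $1\le k\le q-1$, such that $G_\gamma$ is transitive on $\gamma\times(\mathcal V\setminus\gamma)$. Let $A$ be the group of maps $u\mapsto uz$ ($z\in\mathbb F_q^\times$), let $M=G_\gamma\cap N=\{t_y:y\in Y\}$, and let $K=\mathbb F_p[G_\gamma\cap A]$ be the subfield of $\mathbb F_q$ generated by the scalars $z$ with $(u\mapsto uz)\in G_\gamma$. If $M\ne1$, then $M$ is a $K$-vector space (that is, $Y$ is closed under addition and under multiplication by elements of $K$) and $K$ is a proper subfield of $\mathbb F_q$. *)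

(* V = F_q is modelled by an arbitrary finite field F
   (every finite field is F_q with q = p^a, p = char F prime). *)
From HB Require Import structures.
From mathcomp Require Import all_boot all_order all_algebra all_fingroup all_solvable all_field.
Set Implicit Arguments. Unset Strict Implicit. Unset Printing Implicit Defensive.
Import GRing.Theory.
Local Open Scope ring_scope.

Section Defs.
Variable F : finFieldType.

Definition translations : {set {perm F}} :=
  [set g : {perm F} | [exists y : F, [forall u : F, g u == u + y]]].

Definition scalars : {set {perm F}} :=
  [set g : {perm F} | [exists z : F, (z != 0) && [forall u : F, g u == u * z]]].

(* g in GammaL(1,q): u |-> a * sigma(u), a <> 0, sigma a field automorphism
   (a ring endomorphism of a finite field is an automorphism). *)
Definition in_GammaL1 (g : {perm F}) : Prop :=
  exists a : F, a != 0 /\ exists s : {rmorphism F -> F}, forall u, g u = a * s u.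

Definition transl_vectors (H : {set {perm F}}) : {set F} :=
  [set y : F | [exists g in H, [forall u : F, g u == u + y]]].

Definition scalar_values (H : {set {perm F}}) : {set F} :=
  [set z : F | [exists g in H, (z != 0) && [forall u : F, g u == u * z]]].

Definition is_subfield (S : {set F}) : bool :=
  [&& (0 : F) \in S, (1 : F) \in S,
      [forall x in S, forall y in S, (x - y \in S) && (x * y \in S)] &
      [forall x in S, x^-1 \in S]].

Definition gen_subfield (Z : {set F}) : {set F} :=
  [set x : F | [forall S : {set F}, (is_subfield S && (Z \subset S)) ==> (x \in S)]].

End Defs.

(* The scalars z with (u |-> u z) in G_gamma act on the translation vectors Y by
   conjugation, and the set of c with cY <= Y is a subfield; hence it contains K
   and Y is a K-space.  If K were all of F_q, a nonzero Y would be F_q itself, so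
   gamma would be invariant under every translation and hence be empty or all of
   F_q, contradicting 1 <= |gamma| <= q - 1. *)
From HB Require Import structures.
From mathcomp Require Import all_boot all_order all_algebra all_fingroup all_solvable all_field.
Set Implicit Arguments. Unset Strict Implicit. Unset Printing Implicit Defensive.
Import GRing.Theory.
Local Open Scope ring_scope.

Section Subfields.
Variable F : finFieldType.

Lemma gen_subfield_min (Z S : {set F}) :
  is_subfield S -> Z \subset S -> gen_subfield Z \subset S.
Proof.
move=> subS sZS; apply/subsetP => x; rewrite inE => /forallP /(_ S).
by rewrite subS sZS => /implyP; apply.
Qed.

Definition multipliers (Y : {set F}) : {set F} :=
  [set c : F | [forall y in Y, c * y \in Y]].

Lemma multipliersP (Y : {set F}) c :
  reflect {in Y, forall y, c * y \in Y} (c \in multipliers Y).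
Proof.
rewrite inE; apply: (iffP forallP) => [cY y yY | cY y].
  by have := cY y; rewrite yY.
by apply/implyP; apply: cY.
Qed.

Lemma multipliers_full_eq (Y : {set F}) (y : F) :
  multipliers Y = [set: F] -> y \in Y -> y != 0 -> Y = [set: F].
Proof.
move=> MY yY y0; apply/setP => w; rewrite inE -(divfK y0 w).
by have := in_setT (w / y); rewrite -MY => /multipliersP; apply.
Qed.

Variable Y : {set F}.
Hypotheses (Y0 : 0 \in Y) (YB : {in Y &, forall a b, a - b \in Y}).

Lemma is_subfield_multipliers : is_subfield (multipliers Y).
Proof.
have mul0Y : 0 \in multipliers Y by apply/multipliersP => y _; rewrite mul0r.
apply/and4P; split => //.
- by apply/multipliersP => y yY; rewrite mul1r.
- apply/forall_inP => x /multipliersP xY; apply/forall_inP => w /multipliersP wY.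
  apply/andP; split; apply/multipliersP => y yY.
    by rewrite mulrBl YB ?xY ?wY.
  by rewrite -mulrA xY ?wY.
- apply/forall_inP => x /multipliersP xY.
  have [-> | x0] := eqVneq x 0; first by rewrite invr0.
  (* x * Y <= Y has the size of Y, so it is Y. *)
  have xY_eq : [set x * w | w in Y] = Y.
    apply/eqP; rewrite eqEcard card_imset; last exact: mulfI.
    by rewrite leqnn andbT; apply/subsetP => _ /imsetP[w wY ->]; apply: xY.
  apply/multipliersP => y; rewrite -{1}xY_eq => /imsetP[w wY ->].
  by rewrite mulrA mulVf // mul1r.
Qed.

End Subfields.

Section TranslationVectors.
Variables (F : finFieldType) (H : {group {perm F}}).

Lemma transl_vectorsP y :
  reflect (exists2 g, g \in H & forall u, g u = u + y) (y \in transl_vectors H).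
Proof.
rewrite inE; apply: (iffP existsP) => [[g /andP[gH /forallP e]] | [g gH e]].
  by exists g => // u; apply/eqP.
by exists g; rewrite gH; apply/forallP => u; rewrite e.
Qed.

Lemma transl_vectors0 : (0 : F) \in transl_vectors H.
Proof. by apply/transl_vectorsP; exists 1%g => // u; rewrite perm1 addr0. Qed.

Lemma transl_vectorsD y1 y2 : y1 \in transl_vectors H -> y2 \in transl_vectors H ->
  y1 + y2 \in transl_vectors H.
Proof.
move=> /transl_vectorsP[g1 g1H e1] /transl_vectorsP[g2 g2H e2].
apply/transl_vectorsP; exists (g1 * g2)%g; first exact: groupM.
by move=> u; rewrite permM e2 e1 addrA.
Qed.

Lemma transl_vectorsB y1 y2 : y1 \in transl_vectors H -> y2 \in transl_vectors H ->
  y1 - y2 \in transl_vectors H.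
Proof.
move=> y1H /transl_vectorsP[g gH e]; apply: transl_vectorsD => //.
apply/transl_vectorsP; exists (g^-1)%g; first by rewrite groupV.
by move=> u; apply: (@perm_inj _ g); rewrite permKV e subrK.
Qed.

(* Conjugating t_y by (u |-> u z) gives t_{zy}. *)
Lemma transl_vectorsZ z y : z \in scalar_values H -> y \in transl_vectors H ->
  z * y \in transl_vectors H.
Proof.
rewrite inE => /existsP[h /and3P[hH z0 /forallP eh]] /transl_vectorsP[g gH e].
have ehV u : (h^-1)%g u = u / z.
  by apply: (@perm_inj _ h); rewrite permKV (eqP (eh _)) divfK.
apply/transl_vectorsP; exists (h^-1 * g * h)%g; first by rewrite !groupM ?groupV.
by move=> u; rewrite !permM e (eqP (eh _)) ehV mulrDl divfK // mulrC.
Qed.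

Lemma gen_subfield_scalar_values_sub :
  gen_subfield (scalar_values H) \subset multipliers (transl_vectors H).
Proof.
apply: gen_subfield_min.
  exact: is_subfield_multipliers transl_vectors0 transl_vectorsB.
apply/subsetP => z zZ; apply/multipliersP => y; exact: transl_vectorsZ.
Qed.

Lemma transl_vectors_neq0 :
  (H :&: translations F)%g != 1%g -> exists2 y, y \in transl_vectors H & y != 0.
Proof.
move=> ntriv.
have /subsetPn[g /setIP[gH]] : ~~ ((H :&: translations F) \subset [1])%g.
  apply: contra ntriv => sub1; rewrite eqEsubset sub1 sub1set !inE group1 /=.
  by apply/existsP; exists 0; apply/forallP => u; rewrite perm1 addr0.
rewrite !inE => /existsP[y /forallP ey] g1.
exists y; first by apply/transl_vectorsP; exists g => // u; apply/eqP.
apply: contraNneq g1 => y0; apply/eqP/permP => u.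
by rewrite perm1 (eqP (ey u)) y0 addr0.
Qed.

End TranslationVectors.

Lemma transl_invariant_full (F : finFieldType) (G : {group {perm F}}) (gamma : {set F}) a :
  transl_vectors ('N_G(gamma | 'P))%G = [set: F] -> a \in gamma -> gamma = [set: F].
Proof.
move=> YT aG; apply/setP => u; rewrite inE.
have /transl_vectorsP[h /setIP[_ hN] eh] : u - a \in transl_vectors ('N_G(gamma | 'P))%G.
  by rewrite YT inE.
by have := astabs_act a hN; rewrite /= apermE eh addrC subrK aG => ->.
Qed.

Theorem lemma6p3 (F : finFieldType) (L G : {group {perm F}}) (gamma : {set F})
  (hL : forall g, g \in L -> in_GammaL1 g)
  (hLtr : forall u v : F, u != 0 -> v != 0 -> exists2 g, g \in L & g u = v)
  (hG : (G :=: translations F * L)%g)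
  (hk1 : (1 <= #|gamma|)%N) (hk2 : (#|gamma| <= #|F| - 1)%N)
  (htr : forall a b c d : F, a \in gamma -> b \notin gamma -> c \in gamma -> d \notin gamma ->
      exists2 g, g \in ('N_G(gamma | 'P))%g & g a = c /\ g b = d) :
  let Gg := ('N_G(gamma | 'P))%g in
  let M := (Gg :&: translations F)%g in
  let Y := transl_vectors Gg in
  let K := gen_subfield (scalar_values Gg) in
  M != 1%g ->
  ((0 : F) \in Y /\ (forall y1 y2, y1 \in Y -> y2 \in Y -> y1 + y2 \in Y)
   /\ (forall c y, c \in K -> y \in Y -> c * y \in Y))
  /\ K != [set: F].
Proof.
move=> Gg M Y K M1; rewrite /Y /K /Gg /M in M1 *.
have KY := gen_subfield_scalar_values_sub ('N_G(gamma | 'P))%G.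
split.
  split; first exact: transl_vectors0.
  split; first exact: transl_vectorsD.
  by move=> c y /(subsetP KY) /multipliersP; apply.
apply/negP => /eqP KT.
have [y yY y0] := transl_vectors_neq0 M1.
have YT : Y = [set: F].
  apply: multipliers_full_eq yY y0.
  by apply/eqP; rewrite eqEsubset subsetT -KT.
have [a aG] : exists a, a \in gamma by apply/set0Pn; rewrite -card_gt0.
have F_gt0 : (0 < #|F|)%N by apply/card_gt0P; exists 0.
move: hk2; rewrite (transl_invariant_full YT aG) cardsT.
by case: #|F| F_gt0 => // n _; rewrite subn1 ltnn.
Qed.
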